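(* Let $n \ge 2$ and $r \in \mathbb{Z}$ with $r \equiv 2 \pmod 3$ and $3 \mid n$. Then neither $\mathcal{E}_{n,r} := \mathcal{P}_n(2;1-r)$ nor $\mathcal{P}_n(r;r)$ is a regular presentation of $Q_{4n}$.
   Context: $Q_{4n}$ is identified with $\langle x, y \mid x^n y^{-2}, xyxy^{-1} \rangle$. A presentation $\langle x, y \mid x^n y^{-2}, R\rangle$ is regular if $x \mapsto x$, $y \mapsto y$ induces a group isomorphism from the group it presents to $Q_{4n}$. For integers $n_1,m_1$, $\mathcal{P}_n(n_1;m_1) = \langle x, y \mid x^n y^{-2},\ x^{n_1} y x^{m_1} y^{-1} x^{1-n_1} y x^{1-m_1} y^{-1} \rangle$. *)

From Stdlib Require Import ZArith.
Open Scope Z_scope.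

Record group := Group {
  carrier :> Type;
  gmul : carrier -> carrier -> carrier;
  ginv : carrier -> carrier;
  gone : carrier;
  gmulA : forall a b c, gmul a (gmul b c) = gmul (gmul a b) c;
  gmul1g : forall a, gmul gone a = a;
  gmulVg : forall a, gmul (ginv a) a = gone
}.
Arguments gmul {g}. Arguments ginv {g}. Arguments gone {g}.

Definition gpowp {G : group} (a : G) (p : positive) : G :=
  Pos.iter (gmul a) gone p.
Definition gpow {G : group} (a : G) (z : Z) : G :=
  match z with
  | Z0 => gone
  | Zpos p => gpowp a p
  | Zneg p => ginv (gpowp a p)
  end.

(* Relators of Q_{4n} = < x, y | x^n y^-2, x y x y^-1 >, evaluated at x:=a, y:=b *)
Definition Q_rels (n : Z) {G : group} (a b : G) : Prop :=
  gmul (gpow a n) (gpow b (-2)) = gone /\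
  gmul (gmul (gmul a b) a) (ginv b) = gone.

(* Relators of P_n(n1;m1) = < x, y | x^n y^-2,
      x^n1 y x^m1 y^-1 x^(1-n1) y x^(1-m1) y^-1 >, evaluated at x:=a, y:=b *)
Definition P_rels (n n1 m1 : Z) {G : group} (a b : G) : Prop :=
  gmul (gpow a n) (gpow b (-2)) = gone /\
  gmul (gmul (gmul (gmul (gmul (gmul (gmul
    (gpow a n1) b) (gpow a m1)) (ginv b)) (gpow a (1 - n1))) b)
    (gpow a (1 - m1))) (ginv b) = gone.

(* The presentation P_n(n1;m1) is regular iff x |-> x, y |-> y induces an
   isomorphism onto Q_{4n}, i.e. iff both sets of relators have the same normal
   closure in the free group F(x,y), i.e. (universal property of presented
   groups) iff in every group a pair (a,b) satisfies the relators of one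
   presentation exactly when it satisfies those of the other. *)
Definition regular (n n1 m1 : Z) : Prop :=
  forall (G : group) (a b : G), P_rels n n1 m1 a b <-> Q_rels n a b.

From Pilot Require Import Defs.
From Stdlib Require Import ZArith Lia.
From mathcomp Require Import all_boot all_fingroup zify.
Open Scope Z_scope.

(* In S_4 take a = (0 1 2) and b = (2 3). As a^3 = b^2 = 1, every exponent
   n1, m1, 1 - n1, 1 - m1 that is 2 mod 3 turns the second relator of
   P_n(n1;m1) into (a^2 b)^4, which is 1 because a^2 b is a 4-cycle, and
   x^n y^-2 evaluates to 1 when 3 | n.  But a b a b^-1 = (a b)^2 is not 1,
   a b being a 4-cycle as well: the pair (a, b) satisfies the relators of
   P_n(n1;m1) and not those of Q_4n. *)

Definition group_of_groupType (gT : groupType) : Defs.group :=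
  Defs.Group gT *%g inv 1%g mulgA mul1g mulVg.

Section GroupTypePowers.

Variable gT : groupType.
Local Notation G := (group_of_groupType gT).

Lemma gpowp_expg (a : gT) (p : positive) : @gpowp G a p = (a ^+ Pos.to_nat p)%g.
Proof. by rewrite /gpowp Pos2Nat.inj_iter -iter_mulg_1. Qed.

Lemma expg_addn_mul (a : gT) (k q m : nat) :
  (a ^+ k = 1)%g -> (a ^+ (m + q * k) = a ^+ m)%g.
Proof. by move=> ak; rewrite expgnDr mulnC expgnA ak expg1n mulg1. Qed.

Lemma gpow_mod (a : gT) (k : nat) (z : Z) :
  (0 < k)%N -> (a ^+ k = 1)%g -> @gpow G a z = (a ^+ Z.to_nat (z mod Z.of_nat k))%g.
Proof.
move=> k_gt0 ak.
move: (Z.div_mod z (Z.of_nat k) ltac:(lia)) (Z.mod_pos_bound z (Z.of_nat k) ltac:(lia)).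
move: (z / Z.of_nat k) (z mod Z.of_nat k) => q r z_eq r_bound.
case: z z_eq => [|p|p] z_eq /=.
- have q_eq0 : q = 0 by nia.
  by have -> : r = 0 by lia.
- rewrite gpowp_expg.
  have [m ->] : exists m : nat, Pos.to_nat p = (Z.to_nat r + m * k)%N.
    have q_ge0 : 0 <= q by nia.
    by exists (Z.to_nat q); lia.
  by rewrite expg_addn_mul.
- apply: mulg1_eq; rewrite gpowp_expg -expgnDr.
  have [m ->] : exists m : nat, (Pos.to_nat p + Z.to_nat r)%N = (0 + m * k)%N.
    by exists (Z.to_nat (- q)); nia.
  by rewrite expg_addn_mul.
Qed.

End GroupTypePowers.

Section Order3Relators.

Variables (gT : groupType) (a b : gT).
Hypotheses (a3 : (a ^+ 3 = 1)%g) (b2 : (b ^+ 2 = 1)%g).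
Hypothesis a2b4 : ((a ^+ 2 * b) ^+ 4 = 1)%g.

Lemma P_rels_mod3 (n n1 m1 : Z) :
  (3 | n) -> n1 mod 3 = 2 -> m1 mod 3 = 2 ->
  @P_rels n n1 m1 (group_of_groupType gT) a b.
Proof.
move=> /Z.mod_divide n_mod3 n1_mod3 m1_mod3.
have n1'_mod3 : (1 - n1) mod 3 = 2 by Z.div_mod_to_equations; lia.
have m1'_mod3 : (1 - m1) mod 3 = 2 by Z.div_mod_to_equations; lia.
have bV : (b^-1 = b)%g by apply: mulg1_eq.
rewrite /P_rels !(@gpow_mod _ a 3) // (@gpow_mod _ b 2) //=.
rewrite n_mod3 // n1_mod3 m1_mod3 n1'_mod3 m1'_mod3 /= bV.
split; first by rewrite mulg1.
by rewrite -[RHS]a2b4 !expgS expg0 !mulg1 !mulgA.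
Qed.

End Order3Relators.

Definition cycle012 : {perm 'I_4} :=
  (tperm (@Ordinal 4 0 isT) (@Ordinal 4 1 isT) *
   tperm (@Ordinal 4 1 isT) (@Ordinal 4 2 isT))%g.

Definition swap23 : {perm 'I_4} := tperm (@Ordinal 4 2 isT) (@Ordinal 4 3 isT).

Lemma cycle012_exp3 : (cycle012 ^+ 3 = 1)%g.
Proof.
apply/permP => i; rewrite !expgS expg0 mulg1 !permM !permE.
by case: i => [[|[|[|[|m]]]] Hm] //; apply/eqP.
Qed.

Lemma cycle012_sqr_swap23_exp4 : ((cycle012 ^+ 2 * swap23) ^+ 4 = 1)%g.
Proof.
apply/permP => i; rewrite !expgS expg0 !mulg1 !permM !permE.
by case: i => [[|[|[|[|m]]]] Hm] //; apply/eqP.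
Qed.

Lemma cycle012_swap23_not_Q_rels (n : Z) :
  ~ @Q_rels n (group_of_groupType {perm 'I_4}) cycle012 swap23.
Proof.
case=> _ /(congr1 (fun s : {perm 'I_4} => s (@Ordinal 4 0 isT))) /=.
by rewrite tpermV !permM !permE => /eqP.
Qed.

Lemma not_regular_mod3 (n n1 m1 : Z) :
  (3 | n) -> n1 mod 3 = 2 -> m1 mod 3 = 2 -> ~ regular n n1 m1.
Proof.
move=> n_div3 n1_mod3 m1_mod3 /(_ (group_of_groupType _) cycle012 swap23) [P_Q _].
apply: (cycle012_swap23_not_Q_rels n); apply: P_Q.
apply: P_rels_mod3 => //.
- exact: cycle012_exp3.
- exact: tperm2.
- exact: cycle012_sqr_swap23_exp4.
Qed.

Theorem proposition3p12 (n r : Z) :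
  2 <= n -> r mod 3 = 2 -> (3 | n) ->
  ~ regular n 2 (1 - r) /\ ~ regular n r r.
Proof.
move=> _ r_mod3 n_div3.
by split; apply: not_regular_mod3 => //; Z.div_mod_to_equations; lia.
Qed.
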